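(* Let $E: y^2=x^3+Ax^2+Bx$ ($A,B\in\mathbb{Z}$) with $E(\mathbb{Q})[2]\simeq\mathbb{Z}/2\mathbb{Z}$, let $\Delta$ be the discriminant of $E$ and $\Delta'$ the discriminant of $E'$. Let $d$ be a squarefree integer and $p$ a prime with $p\mid d$ and $\gcd(p,2\Delta)=1$. Then $$W_p^d=\begin{cases}\langle \Delta\rangle & \text{if } \left(\frac{\Delta'}{p}\right)=-1,\\ \langle \Delta,\ d(A+2\sqrt{B})\rangle & \text{if } \left(\frac{\Delta'}{p}\right)=1,\end{cases}$$ as subgroups of $\mathbb{Q}_p^\times/(\mathbb{Q}_p^\times)^2$.
   Context: $E': y^2=x^3-2Ax^2+(A^2-4B)x$, $\phi:E\to E'$ the 2-isogeny with kernel $\langle(0,0)\rangle$; $E^d,E'^d$ are the quadratic twists by $d$ with twisted isogeny $\phi$. Up to squares, $\Delta\equiv A^2-4B$ and $\Delta'\equiv B$; in particular when $(\Delta'/p)=1$, $B$ is a square in $\mathbb{Q}_p$ so $\sqrt{B}\in\mathbb{Q}_p$. $W_p^d=\kappa_p(E'^d(\mathbb{Q}_p)/\phi(E^d(\mathbb{Q}_p)))\subset \mathbb{Q}_p^\times/(\mathbb{Q}_p^\times)^2$, where $\kappa_p$ is the local Kummer map (on the untwisted curve it sends $(x,y)\ne(0,0)$ to $x$ and $(0,0)$ to $\Delta$). *)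

From HB Require Import structures.
From mathcomp Require Import all_boot all_order all_algebra.
Set Implicit Arguments. Unset Strict Implicit. Unset Printing Implicit Defensive.
Import Order.TTheory GRing.Theory Num.Theory.
Local Open Scope ring_scope.

Definition disc (a b : int) : int := 16 * b ^+ 2 * (a ^+ 2 - 4 * b).

(* E : y^2 = x^3 + A x^2 + B x,  E' : y^2 = x^3 - 2A x^2 + (A^2 - 4B) x. *)
Definition discE (A B : int) : int := disc A B.
Definition discE' (A B : int) : int := disc (- (2 * A)) (A ^+ 2 - 4 * B).

Definition legendre (a : int) (p : nat) : int :=
  if (p%:Z %| a)%Z then 0
  else if [exists x : 'I_p, (p%:Z %| (x%:Z ^+ 2 - a))%Z] then 1 else -1.

Definition squarefree_int (d : int) : Prop :=
  d != 0 /\ forall m : nat, (m * m %| `|d|)%N -> m = 1%N.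

Definition padic_val_rat (p : nat) (q : rat) : int :=
  (logn p `|numq q|)%:Z - (logn p `|denq q|)%:Z.

Definition vclose (F : fieldType) (v : F -> int) (N : int) (x : F) : Prop :=
  x = 0 \/ N <= v x.

(* F together with v : F -> int is (a model of) the field Q_p: a field of
   characteristic 0 with a discrete valuation extending the p-adic valuation
   of Q, complete, and in which Q is dense.  This characterizes Q_p up to
   isomorphism of valued fields. *)
Definition is_Qp (p : nat) (F : fieldType) (v : F -> int) : Prop :=
  (forall n : nat, (n.+1)%:R != (0 : F)) /\ [/\
      (forall x y : F, x != 0 -> y != 0 -> v (x * y) = v x + v y),
      (forall x y : F, x != 0 -> y != 0 -> x + y != 0 ->
          (v x <= v (x + y)) || (v y <= v (x + y))),
      (forall q : rat, q != 0 -> v (ratr q) = padic_val_rat p q),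
      (forall s : nat -> F,
          (forall N : int, exists M : nat, forall m n : nat,
              (M <= m)%N -> (M <= n)%N -> vclose v N (s m - s n)) ->
          exists L : F, forall N : int, exists M : nat, forall n : nat,
              (M <= n)%N -> vclose v N (s n - L))
    & (forall (x : F) (N : int), exists q : rat, vclose v N (x - ratr q))].

(* u lies (modulo squares) in the image of the Kummer map
   E_{a,b}(F) -> F^x/(F^x)^2 for E_{a,b} : y^2 = x^3 + a x^2 + b x,
   which sends O |-> 1, (0,0) |-> b, and (x,y) |-> x otherwise. *)
Definition kummer_image (F : fieldType) (a b u : F) : Prop :=
  (exists w : F, w != 0 /\ u = w ^+ 2) \/
  (exists w : F, w != 0 /\ u = b * w ^+ 2) \/
  (exists x y w : F, y ^+ 2 = x ^+ 3 + a * x ^+ 2 + b * x /\ x != 0 /\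
       w != 0 /\ u = x * w ^+ 2).

(* W_p^d (as a set of representatives of F^x/(F^x)^2): the image of
   E'^d(F) : y^2 = x^3 - 2dA x^2 + d^2 (A^2 - 4B) x under the Kummer map. *)
Definition Wpd (F : fieldType) (A B d : int) (u : F) : Prop :=
  kummer_image ((- (2 * d * A))%:~R) ((d ^+ 2 * (A ^+ 2 - 4 * B))%:~R) u.

Definition span1 (F : fieldType) (g u : F) : Prop :=
  exists (e : bool) (w : F), w != 0 /\ u = g ^+ e * w ^+ 2.

Definition span2 (F : fieldType) (g1 g2 u : F) : Prop :=
  exists (e1 e2 : bool) (w : F), w != 0 /\ u = g1 ^+ e1 * g2 ^+ e2 * w ^+ 2.

(* Write a point as (d X, y), so that
   y^2 = d^3 X Q(X) with Q(X) = (X - A)^2 - 4B, and recall v(d) = 1 since d is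
   squarefree.  Since p is odd, a unit congruent to 1 mod p is a square
   (Hensel).  If v(X) < 0 then Q(X) is X^2 times such a unit, and if v(X) > 0
   it is C = A^2 - 4B times such a unit; either way d X is a square or lies in
   the class of C, which is the class of Delta.  If v(X) = 0, comparing the
   parities of v(y^2) and v(d^3 X Q(X)) shows that X is a root of Q mod p.
   Such a root exists only if B is a square mod p, that is, only if
   (Delta'/p) = 1.  In that case B = s^2 in Q_p, X is congruent to A + 2s or
   to A - 2s, and d X lies in the class of d(A + 2s) or of d(A - 2s).  These
   are the x-coordinates of the two remaining 2-torsion points, and
   d(A - 2s) = Delta d(A + 2s) modulo squares. *)

From HB Require Import structures.
From mathcomp Require Import all_boot all_order all_algebra.
From mathcomp Require Import ring zify.
Import Order.TTheory GRing.Theory Num.Theory.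
Set Implicit Arguments. Unset Strict Implicit.
Local Open Scope ring_scope.

Section SquareClasses.
Variable F : fieldType.

Definition sqcoset (k u : F) := exists2 w : F, w != 0 & u = k * w ^+ 2.

Lemma sqcoset_trans (k l u : F) : sqcoset k l -> sqcoset l u -> sqcoset k u.
Proof.
move=> [w w0 ->] [w' w'0 ->]; exists (w * w'); first by rewrite mulf_neq0.
by rewrite exprMn [RHS]mulrA.
Qed.

Lemma sqcoset_sym (k u : F) : sqcoset k u -> sqcoset u k.
Proof.
move=> [w w0 ->]; exists w^-1; first by rewrite invr_neq0.
by rewrite -mulrA -exprMn mulfV // expr1n mulr1.
Qed.

Lemma sqcoset_of_sqr (u k t y : F) :
  u != 0 -> k != 0 -> t != 0 -> y ^+ 2 = u * (k * t ^+ 2) -> sqcoset k u.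
Proof.
move=> u0 k0 t0 yE.
have y0 : y != 0.
  by apply: contraNneq (mulf_neq0 u0 (mulf_neq0 k0 (expf_neq0 2 t0))) => y0; rewrite -yE y0 expr0n.
exists (y / (k * t)); first by rewrite !(mulf_neq0, invr_neq0).
by rewrite expr_div_n yE; field; rewrite k0 t0.
Qed.

Lemma sqcosetMl (g k u : F) : sqcoset k u -> sqcoset (g * k) (g * u).
Proof. by move=> [w w0 ->]; exists w; rewrite ?mulrA. Qed.

Lemma span1E (g u : F) : span1 g u <-> sqcoset 1 u \/ sqcoset g u.
Proof.
split=> [[[] [w [w0 ->]]] | [] [w w0 ->]].
- by right; exists w; rewrite ?expr1.
- by left; exists w.
- by exists false, w.
- by exists true, w; rewrite expr1.
Qed.

Lemma span2E (g1 g2 u : F) : span2 g1 g2 u <->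
  [\/ sqcoset 1 u, sqcoset g1 u, sqcoset g2 u | sqcoset (g1 * g2) u].
Proof.
split=> [[[] [[] [w [w0 ->]]]]|].
- by constructor 4; exists w; rewrite ?expr1.
- by constructor 2; exists w; rewrite ?expr1 ?mulr1.
- by constructor 3; exists w; rewrite ?expr1 ?mul1r.
- by constructor 1; exists w; rewrite ?mul1r.
by case=> -[w w0 ->]; [exists false, false | exists true, false | exists false, true
  | exists true, true]; exists w; rewrite ?expr1 ?mul1r ?mulr1.
Qed.

End SquareClasses.

Lemma legendre_neqN1 (a t : int) (p : nat) :
  (0 < p)%N -> (p%:Z %| t ^+ 2 - a)%Z -> legendre a p != -1.
Proof.
move=> p_gt0 pt; rewrite /legendre; case: ifP => // _.
have p0 : p%:Z != 0 by rewrite eqz_nat -lt0n.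
have r_ge0 := modz_ge0 t p0.
have r_lt : (`|(t %% p)%Z| < p)%N by rewrite -ltz_nat gez0_abs // ltz_pmod // ltz_nat.
suff -> : [exists x : 'I_p, (p%:Z %| x%:Z ^+ 2 - a)%Z] by [].
apply/existsP; exists (Ordinal r_lt); rewrite /= gez0_abs //.
have -> : (t %% p)%Z ^+ 2 - a = (t ^+ 2 - a) + ((t %% p)%Z - t) * ((t %% p)%Z + t) by ring.
by rewrite rpredD // dvdz_mulr // -eqz_mod_dvd modz_mod.
Qed.

Lemma legendre1_sqr_mod (a : int) (p : nat) :
  legendre a p = 1 -> exists t : int, (p%:Z %| t ^+ 2 - a)%Z.
Proof. by rewrite /legendre; case: ifP => // _; case: ifP => // /existsP [x px] _; exists x. Qed.

Section Valuation.
Variables (F : fieldType) (v : F -> int).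
Hypothesis valM : forall x y : F, x != 0 -> y != 0 -> v (x * y) = v x + v y.
Hypothesis valD : forall x y : F, x != 0 -> y != 0 -> x + y != 0 ->
  (v x <= v (x + y)) || (v y <= v (x + y)).

Definition vcauchy (s : nat -> F) := forall N : int, exists M : nat,
  forall m n : nat, (M <= m)%N -> (M <= n)%N -> vclose v N (s m - s n).

Definition vcomplete := forall s : nat -> F, vcauchy s ->
  exists L : F, forall N : int, exists M : nat,
    forall n : nat, (M <= n)%N -> vclose v N (s n - L).

Lemma val1 : v 1 = 0.
Proof.
have one0 : (1 : F) != 0 := oner_neq0 _.
by have := valM one0 one0; rewrite mulr1 => ?; lia.
Qed.

Lemma valV (x : F) : x != 0 -> v x^-1 = - v x.
Proof. by move=> x0; have := valM x0 (invr_neq0 x0); rewrite mulfV // val1 => ?; lia. Qed.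

Lemma valN (x : F) : v (- x) = v x.
Proof.
have [->|x0] := eqVneq x 0; first by rewrite oppr0.
have N10 : (-1 : F) != 0 by rewrite oppr_eq0 oner_neq0.
have vN1 : v (-1) = 0 by have := valM N10 N10; rewrite mulrNN mulr1 val1 => ?; lia.
by rewrite -mulN1r valM // vN1 add0r.
Qed.

Lemma valX (x : F) n : x != 0 -> v (x ^+ n) = v x *+ n.
Proof.
move=> x0; elim: n => [|n IH]; first by rewrite expr0 val1.
by rewrite exprS valM ?expf_neq0 // IH mulrS.
Qed.

Lemma vclose_le N M (x : F) : N <= M -> vclose v M x -> vclose v N x.
Proof. by move=> NM [->|Mx]; [left | right; lia]. Qed.

Lemma vcloseN N (x : F) : vclose v N x -> vclose v N (- x).
Proof. by case=> [->|h]; [left; rewrite oppr0 | right; rewrite valN]. Qed.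

Lemma vcloseD N (x y : F) : vclose v N x -> vclose v N y -> vclose v N (x + y).
Proof.
case=> [->|Nx]; first by rewrite add0r.
case=> [->|Ny]; first by rewrite addr0; right.
have [->|x0] := eqVneq x 0; first by rewrite add0r; right.
have [->|y0] := eqVneq y 0; first by rewrite addr0; right.
have [s0|s0] := eqVneq (x + y) 0; first by left.
by right; case/orP: (valD x0 y0 s0); lia.
Qed.

Lemma vcloseB N (x y : F) : vclose v N x -> vclose v N y -> vclose v N (x - y).
Proof. by move=> Nx Ny; apply/vcloseD/vcloseN. Qed.

Lemma vcloseM N M (x y : F) :
  vclose v N x -> vclose v M y -> vclose v (N + M) (x * y).
Proof.
case=> [->|Nx]; first by rewrite mul0r; left.
case=> [->|My]; first by rewrite mulr0; left.
have [->|x0] := eqVneq x 0; first by rewrite mul0r; left.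
have [->|y0] := eqVneq y 0; first by rewrite mulr0; left.
by right; rewrite valM //; lia.
Qed.

Lemma vclose_divr N (x u : F) :
  u != 0 -> vclose v N x -> vclose v (N - v u) (x / u).
Proof. by move=> u0 /vcloseM; apply; right; rewrite valV. Qed.

Lemma vclose_val N (x : F) : x != 0 -> vclose v N x -> N <= v x.
Proof. by move=> x0 [x_eq0|//]; move: x0; rewrite x_eq0 eqxx. Qed.

Lemma vclose_eq0 (x : F) : (forall n : nat, vclose v n%:Z x) -> x = 0.
Proof.
move=> small; apply/eqP/negPn/negP => x0.
by have := vclose_val x0 (small (absz (v x + 1))); lia.
Qed.

Lemma vclose_addr (x y : F) :
  x != 0 -> vclose v (v x + 1) y -> x + y != 0 /\ v (x + y) = v x.
Proof.
move=> x0 [->|xy]; first by rewrite addr0.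
have [->|y0] := eqVneq y 0; first by rewrite addr0.
have s0 : x + y != 0.
  by apply: contraTneq xy => /eqP; rewrite addrC addr_eq0 => /eqP->; rewrite valN; lia.
split=> //.
have := @valD (x + y) (- y) s0; rewrite oppr_eq0 y0 addrK x0 valN => /(_ isT isT).
by case/orP: (valD x0 y0 s0); lia.
Qed.

Lemma vclose0_of_sqr (x : F) : vclose v 0 (x ^+ 2) -> vclose v 0 x.
Proof.
have [->|x0] := eqVneq x 0; first by left.
by move=> /(vclose_val (expf_neq0 2 x0)); rewrite valX // mulr2n => ?; right; lia.
Qed.

Lemma unit_factors (x y : F) : vclose v 0 x -> vclose v 0 y ->
  x * y != 0 -> v (x * y) = 0 -> v x = 0 /\ v y = 0.
Proof.
move=> x_int y_int; rewrite mulf_eq0 negb_or => /andP[x0 y0].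
move: x_int y_int => /(vclose_val x0) ? /(vclose_val y0) ?; rewrite valM //.
by split; lia.
Qed.

Lemma vclose1_mul (x y : F) :
  vclose v 0 x -> vclose v 0 y -> vclose v 1 (x * y) -> vclose v 1 x \/ vclose v 1 y.
Proof.
have [->|x0] := eqVneq x 0; first by left; left.
have [->|y0] := eqVneq y 0; first by right; left.
move=> /(vclose_val x0) x_ge0 /(vclose_val y0) y_ge0 /(vclose_val (mulf_neq0 x0 y0)).
rewrite valM // => xy_ge1.
by have [x_ge1|x_lt1] := lerP 1 (v x); [left | right]; right; lia.
Qed.

Section Complete.
Hypothesis complete : vcomplete.
Hypotheses (two_neq0 : (2 : F) != 0) (val2 : v 2 = 0).

Lemma vcauchy_of_steps (s : nat -> F) :
  (forall k, vclose v (k%:Z + 1) (s k.+1 - s k)) -> vcauchy s.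
Proof.
move=> step.
have tail M j : vclose v (M%:Z + 1) (s (M + j)%N - s M).
  elim: j => [|j IH]; first by rewrite addn0 subrr; left.
  rewrite addnS -(subrK (s (M + j)%N) (s _)) -addrA.
  by apply: vcloseD IH; apply: vclose_le (step _); lia.
move=> N; exists `|N|%N => m n mN nN.
have -> : s m - s n = (s m - s `|N|%N) - (s n - s `|N|%N) by rewrite opprB addrA subrK.
rewrite -(subnKC mN) -(subnKC nN).
by apply: (@vclose_le _ (`|N|%N%:Z + 1)); [lia | apply/vcloseB/tail/tail].
Qed.

Section Newton.
Variable c : F.
Hypothesis c_near1 : vclose v 1 (c - 1).

Fixpoint newton (k : nat) : F :=
  if k is k.+1 then newton k - (newton k ^+ 2 - c) / (2 * newton k) else 1.

Lemma newton_correction (s : F) N :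
  s != 0 -> v s = 0 -> vclose v N (s ^+ 2 - c) -> vclose v N ((s ^+ 2 - c) / (2 * s)).
Proof.
move=> s0 vs /(vclose_divr (mulf_neq0 two_neq0 s0)).
by rewrite valM // val2 vs subr0.
Qed.

Lemma newton_inv k : [/\ newton k != 0, v (newton k) = 0 &
  vclose v (k%:Z + 1) (newton k ^+ 2 - c)].
Proof.
elim: k => [|k [s0 vs err]].
  by split; rewrite /= ?oner_neq0 ?val1 // expr1n -opprB; apply: vcloseN.
have corr := newton_correction s0 vs err.
have small : vclose v (v (newton k) + 1) (- ((newton k ^+ 2 - c) / (2 * newton k))).
  by rewrite vs; apply/vcloseN/(vclose_le _ corr); lia.
have [s'0 vs'] := vclose_addr s0 small.
split => //=; first by rewrite vs' vs.
have -> : (newton k - (newton k ^+ 2 - c) / (2 * newton k)) ^+ 2 - c =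
          ((newton k ^+ 2 - c) / (2 * newton k)) ^+ 2.
  by field; rewrite s0 two_neq0.
by rewrite expr2; apply: vclose_le (vcloseM corr corr); lia.
Qed.

Lemma newton_step k : vclose v (k%:Z + 1) (newton k.+1 - newton k).
Proof.
have [s0 vs err] := newton_inv k.
by rewrite /= addrAC subrr add0r; apply/vcloseN/newton_correction.
Qed.

Lemma sqrt_near1 : exists2 w : F, w != 0 & w ^+ 2 = c.
Proof.
have [L conv] := complete (vcauchy_of_steps newton_step).
have c0 : c != 0.
  by have [] := vclose_addr (oner_neq0 F) (vclose_le _ c_near1); rewrite ?val1 // addrC subrK.
suff L2 : L ^+ 2 = c by exists L => //; apply: contraNneq c0 => L0; rewrite -L2 L0 expr0n.
apply/eqP; rewrite -subr_eq0; apply/eqP/vclose_eq0 => n.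
have [M near] := conv n%:Z; have [s0 vs err] := newton_inv (M + n).
have close : vclose v n%:Z (L - newton (M + n)).
  by rewrite -opprB; apply/vcloseN/near/leq_addr.
have -> : L ^+ 2 - c = (L - newton (M + n)) * ((L - newton (M + n)) + 2 * newton (M + n))
                       + (newton (M + n) ^+ 2 - c) by ring.
apply: vcloseD; last by apply: vclose_le err; lia.
rewrite -[n%:Z]addr0; apply: vcloseM => //.
apply: vcloseD; first by apply: vclose_le close; lia.
by right; rewrite valM // val2 vs.
Qed.

End Newton.

Lemma sqcoset_vclose (k x : F) : k != 0 -> vclose v (v k + 1) (x - k) -> sqcoset k x.
Proof.
move=> k0 /(vclose_divr k0); rewrite addrAC subrr add0r mulrBl mulfV // => near1.
have [w w0 wE] := sqrt_near1 near1.
by exists w => //; rewrite wE mulrC mulfVK.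
Qed.

Lemma vclose0_2M (x : F) : vclose v 0 x -> vclose v 0 (2 * x).
Proof. by move=> x_int; rewrite -[0]addr0; apply: vcloseM => //; right; rewrite val2. Qed.

Lemma twist_point_cases (a b d X y : F) :
  vclose v 0 a -> vclose v 0 b -> a ^+ 2 - 4 * b != 0 -> v (a ^+ 2 - 4 * b) = 0 ->
  d != 0 -> v d = 1 -> X != 0 ->
  y ^+ 2 = d ^+ 3 * X * ((X - a) ^+ 2 - 4 * b) ->
  [\/ sqcoset 1 (d * X), sqcoset (a ^+ 2 - 4 * b) (d * X)
    | v X = 0 /\ vclose v 1 ((X - a) ^+ 2 - 4 * b)].
Proof.
set c := a ^+ 2 - 4 * b; set Q := (X - a) ^+ 2 - 4 * b.
move=> a_int b_int c0 vc d0 vd X0 yE.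
have Q_class k : k != 0 -> sqcoset k Q -> sqcoset k (d * X).
  move=> k0 [w w0 QE]; apply: (@sqcoset_of_sqr _ _ _ (d * w) y); rewrite ?mulf_neq0 //.
  by rewrite yE -/Q QE; ring.
have QE : Q = c + X * (X - 2 * a) by rewrite /Q /c; ring.
have [vX_lt0|vX_ge0] := ltP (v X) 0.
  constructor 1; apply: Q_class (oner_neq0 _) (@sqcoset_trans _ _ (X ^+ 2) _ _ _).
    by exists X; rewrite ?mul1r.
  apply: sqcoset_vclose; first exact: expf_neq0.
  have -> : Q - X ^+ 2 = c + X * (- (2 * a)) by rewrite /Q /c; ring.
  rewrite valX //; apply: (@vclose_le _ (v X)); first by lia.
  apply: vcloseD; first by right; rewrite vc; lia.
  by rewrite -[v X]addr0; apply: vcloseM; [right | apply/vcloseN/vclose0_2M].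
have [vX_gt0|vX_le0] := ltP 0 (v X).
  constructor 2; apply: Q_class c0 (sqcoset_vclose c0 _).
  rewrite vc QE addrAC subrr !add0r -[1]addr0.
  by apply: vcloseM; [right; lia | apply: vcloseB (vclose0_2M a_int); right].
constructor 3; split; first lia.
have [Q0|Q0] := eqVneq Q 0; first by left.
have Q_int : vclose v 0 Q.
  rewrite QE; apply: vcloseD; first by right; rewrite vc.
  rewrite -[0]addr0; apply: vcloseM; first by right.
  by apply: vcloseB (vclose0_2M a_int); right.
have y0 : y != 0.
  apply: contraNneq (mulf_neq0 (mulf_neq0 (expf_neq0 3 d0) X0) Q0) => y0.
  by rewrite -yE y0 expr0n.
(* 2 v(y) = 3 + v(Q), so v(Q) is odd. *)
right; have := valX 2 y0; rewrite yE valM ?mulf_neq0 ?expf_neq0 // valM ?expf_neq0 // valX // vd.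
by have := vclose_val Q0 Q_int; lia.
Qed.

Lemma root_cases (g1 g2 X : F) :
  g1 != 0 -> v g1 = 0 -> g2 != 0 -> v g2 = 0 -> vclose v 0 X ->
  vclose v 1 ((X - g1) * (X - g2)) -> sqcoset g1 X \/ sqcoset g2 X.
Proof.
move=> g10 vg1 g20 vg2 X_int /vclose1_mul [].
- by apply: vcloseB X_int _; right; rewrite vg1.
- by apply: vcloseB X_int _; right; rewrite vg2.
- by left; apply: sqcoset_vclose; rewrite ?vg1.
- by right; apply: sqcoset_vclose; rewrite ?vg2.
Qed.

End Complete.

Section PAdic.
Variable p : nat.
Hypotheses (p_pr : prime p) (char0 : forall n : nat, n.+1%:R != 0 :> F).
Hypothesis val_rat : forall q : rat, q != 0 -> v (ratr q) = padic_val_rat p q.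
Hypothesis rat_dense : forall (x : F) (N : int), exists q : rat, vclose v N (x - ratr q).

Lemma intr_neq0 (z : int) : z != 0 -> z%:~R != 0 :> F.
Proof.
case: z => [[|n]|n] //= _; first by rewrite -pmulrn char0.
by rewrite NegzE intrN oppr_eq0 -pmulrn char0.
Qed.

Lemma val_int (z : int) : z != 0 -> v z%:~R = (logn p `|z|)%:Z.
Proof.
move=> z0; have := val_rat (q := z%:~R); rewrite intr_eq0 => /(_ z0).
by rewrite /ratr /padic_val_rat numq_int denq_int divr1 logn1 subr0.
Qed.

Lemma vclose0_int (z : int) : vclose v 0 (z%:~R : F).
Proof. by have [->|z0] := eqVneq z 0; [left | right; rewrite val_int]. Qed.

Lemma dvdz_vclose1 (z : int) : (p%:Z %| z)%Z <-> vclose v 1 (z%:~R : F).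
Proof.
have [->|z0] := eqVneq z 0; first by split=> _; [left | rewrite dvdz0].
have logE : (p %| `|z|)%N = (0 < logn p `|z|)%N.
  by rewrite logn_gt0 mem_primes p_pr absz_gt0 z0.
rewrite -[(_ %| _)%Z]/(p %| `|z|)%N logE; split=> [log_gt0|].
  by right; rewrite val_int //; lia.
case=> [/eqP|]; first by rewrite (negPf (intr_neq0 z0)).
by rewrite val_int //; lia.
Qed.

Lemma int_unit (z : int) : ~~ (p%:Z %| z)%Z -> z%:~R != 0 :> F /\ v z%:~R = 0.
Proof.
move=> pNz; have z0 : z != 0 by apply: contraNneq pNz => ->; rewrite dvdz0.
split; first exact: intr_neq0.
by rewrite val_int // logn_coprime // prime_coprime.
Qed.

Lemma not_dvd_denq (q : rat) : vclose v 0 (ratr q : F) -> ~~ (p%:Z %| denq q)%Z.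
Proof.
set n := numq q; set m := denq q => q_int; apply/negP => pm.
have pNn : ~~ (p%:Z %| n)%Z.
  apply/negP => pn; have := coprime_num_den q; rewrite -/n -/m /coprime.
  have : (p %| gcdn `|n| `|m|)%N by rewrite dvdn_gcd; move: pn pm; rewrite !dvdzE => -> ->.
  by move=> /[swap] /eqP ->; rewrite dvdn1 => /eqP p1; move: p_pr; rewrite p1.
have [n0 vn] := int_unit pNn.
have mF0 : m%:~R != 0 :> F := intr_neq0 (denq_neq0 q).
have /(dvdz_vclose1 m) /(vclose_val mF0) vm := pm.
have qE : ratr q = n%:~R / m%:~R :> F by [].
have q0 : ratr q != 0 :> F by rewrite qE mulf_neq0 ?invr_neq0.
have := vclose_val q0 q_int.
by rewrite qE valM ?invr_neq0 // valV // vn sub0r oppr_ge0 => /(le_trans vm).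
Qed.

Lemma int_approx (X : F) : vclose v 0 X -> exists z : int, vclose v 1 (X - z%:~R).
Proof.
move=> X_int; have [q Xq] := rat_dense X 1.
have q_int : vclose v 0 (ratr q : F).
  by rewrite -[ratr q](subKr X); apply: vcloseB X_int (vclose_le _ Xq).
have pNm := not_dvd_denq q_int.
set n := numq q; set m := denq q in pNm *.
have [mF0 vm] := int_unit pNm.
have [u [w bez]] := Bezoutz m p.
have coprime_mp : coprime `|m| p by rewrite coprime_sym prime_coprime // -dvdzE.
have wpE : w%:~R * p%:~R = 1 - u%:~R * m%:~R :> F.
  apply: (addrI (u%:~R * m%:~R)); rewrite [RHS]addrC subrK -!intrM -intrD bez.
  by rewrite /gcdz (eqP coprime_mp).
exists (n * u).
have -> : X - (n * u)%:~R = (X - ratr q) + (n * w * p)%:~R / m%:~R.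
  by rewrite [ratr q]/ratr -/n -/m !intrM -(mulrA n%:~R) wpE; field.
apply: vcloseD Xq _.
have /(vclose_divr mF0) : vclose v 1 (n * w * p)%:~R by apply/dvdz_vclose1/dvdz_mull/dvdzz.
by rewrite vm subr0.
Qed.

Section Curve.
Hypothesis complete : vcomplete.
Variables A B d : int.
Hypotheses (d_sqfree : squarefree_int d) (p_dvd_d : (p%:Z %| d)%Z).
Hypothesis p_coprime : coprime p `|(2 * discE A B)%R|%N.

Let a : F := A%:~R.
Let b : F := B%:~R.
Let c : F := a ^+ 2 - 4 * b.
Let dF : F := d%:~R.

Lemma unit_of_dvd_disc (z : int) : (z %| 2 * discE A B)%Z -> z%:~R != 0 :> F /\ v z%:~R = 0.
Proof.
have pN : ~~ (p%:Z %| 2 * discE A B)%Z by rewrite dvdzE -prime_coprime.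
by move=> z_dvd; apply: int_unit; apply: contraNN pN => /dvdz_trans; apply.
Qed.

Lemma two_unit : (2 : F) != 0 /\ v 2 = 0.
Proof. exact: (unit_of_dvd_disc (dvdz_mulr _ (dvdzz 2))). Qed.

Lemma b_unit : b != 0 /\ v b = 0.
Proof.
apply: unit_of_dvd_disc.
have -> : 2 * discE A B = 32 * B * (A ^+ 2 - 4 * B) * B by rewrite /discE /disc; ring.
exact/dvdz_mull/dvdzz.
Qed.

Lemma c_unit : c != 0 /\ v c = 0.
Proof.
have -> : c = (A ^+ 2 - 4 * B)%:~R by rewrite intrB intrM rmorphXn.
apply: unit_of_dvd_disc.
have -> : 2 * discE A B = 32 * B ^+ 2 * (A ^+ 2 - 4 * B) by rewrite /discE /disc; ring.
exact/dvdz_mull/dvdzz.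
Qed.

Lemma dF_val : dF != 0 /\ v dF = 1.
Proof.
have d0 : d != 0 by case: d_sqfree.
split; first exact: intr_neq0.
rewrite /dF val_int //.
have log_gt0 : (0 < logn p `|d|)%N.
  by rewrite logn_gt0 mem_primes p_pr absz_gt0 d0; move: p_dvd_d; rewrite dvdzE.
suff : (logn p `|d| <= 1)%N by lia.
rewrite leqNgt -(pfactor_dvdn 2 p_pr) ?absz_gt0 // expnS expn1.
by apply/negP => /(proj2 d_sqfree) p1; move: p_pr; rewrite p1.
Qed.

Lemma WpdE (u : F) : Wpd A B d u <-> kummer_image (- (2 * dF * a)) (dF ^+ 2 * c) u.
Proof. by rewrite /Wpd intrN !intrM intrB !rmorphXn intrM. Qed.

Lemma disc_class : sqcoset c (discE A B)%:~R.
Proof.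
have [two0 _] := two_unit; have [b0 _] := b_unit.
exists (4 * b); first by rewrite mulf_neq0 // -[4]/(2 * 2) mulf_neq0.
by rewrite /discE /disc !intrM intrB !rmorphXn intrM /c; ring.
Qed.

Lemma Wpd_cases (u : F) : Wpd A B d u ->
  [\/ sqcoset 1 u, sqcoset c u
    | exists2 X, [/\ X != 0, v X = 0 & vclose v 1 ((X - a) ^+ 2 - 4 * b)]
                 & sqcoset (dF * X) u].
Proof.
have [dF0 vdF] := dF_val; have [two0 v2] := two_unit.
move/WpdE => [[w [w0 ->]] | [[w [w0 ->]] | [x [y [w [xy [x0 [w0 ->]]]]]]]].
- by constructor 1; exists w; rewrite ?mul1r.
- by constructor 2; exists (dF * w); rewrite ?mulf_neq0 //; ring.
have xE : x = dF * (x / dF) by field.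
move: (x / dF) xE => X xE; rewrite xE in x0 xy *.
have X0 : X != 0 by move: x0; rewrite mulf_eq0 negb_or => /andP[].
have ux : sqcoset (dF * X) (dF * X * w ^+ 2) by exists w.
have yE : y ^+ 2 = dF ^+ 3 * X * ((X - a) ^+ 2 - 4 * b) by rewrite xy /c; ring.
case: (twist_point_cases complete two0 v2 (vclose0_int A) (vclose0_int B)
  (proj1 c_unit) (proj2 c_unit) dF0 vdF X0 yE) => [X_class|X_class|[vX QX]].
- by constructor 1; apply: sqcoset_trans X_class ux.
- by constructor 2; apply: sqcoset_trans X_class ux.
- by constructor 3; exists X.
Qed.

Lemma Wpd_sqr (u : F) : sqcoset 1 u -> Wpd A B d u.
Proof. by move=> [w w0 ->]; apply/WpdE; left; exists w; rewrite mul1r. Qed.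

Lemma Wpd_c (u : F) : sqcoset c u -> Wpd A B d u.
Proof.
have [dF0 _] := dF_val.
move=> [w w0 ->]; apply/WpdE; right; left; exists (w / dF).
by split; [rewrite mulf_neq0 ?invr_neq0 | field].
Qed.

Lemma Wpd_2torsion (g u : F) :
  g != 0 -> (g - a) ^+ 2 - 4 * b = 0 -> sqcoset (dF * g) u -> Wpd A B d u.
Proof.
have [dF0 _] := dF_val.
move=> g0 g_root [w w0 ->]; apply/WpdE; right; right; exists (dF * g), 0, w.
split; last by rewrite mulf_neq0.
have -> : (dF * g) ^+ 3 + - (2 * dF * a) * (dF * g) ^+ 2 + dF ^+ 2 * c * (dF * g)
          = dF ^+ 3 * g * ((g - a) ^+ 2 - 4 * b) by rewrite /c; ring.
by rewrite g_root mulr0 expr0n.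
Qed.

Lemma no_unit_root : legendre (discE' A B) p = -1 ->
  forall X : F, vclose v 0 X -> ~ vclose v 1 ((X - a) ^+ 2 - 4 * b).
Proof.
move=> leg X X_int QX; have [z Xz] := int_approx X_int.
have /dvdz_vclose1 pQz : vclose v 1 ((z - A) ^+ 2 - 4 * B)%:~R.
  have -> : ((z - A) ^+ 2 - 4 * B)%:~R = ((X - a) ^+ 2 - 4 * b)
      - (X - z%:~R) * (X + z%:~R - 2 * a) :> F.
    by rewrite !(rmorphB, rmorphM, rmorphXn) /a /b; ring.
  apply: vcloseB QX _; rewrite -[1]addr0; apply: vcloseM Xz _.
  exact: vcloseB (vcloseD X_int (vclose0_int z)) (vclose0_2M (proj2 two_unit) (vclose0_int A)).
(* Delta' = (16 C)^2 B and 4B = (z - A)^2 mod p. *)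
move/eqP: leg; apply/negP/(legendre_neqN1 (t := 8 * (A ^+ 2 - 4 * B) * (z - A))).
  exact: prime_gt0.
have -> : (8 * (A ^+ 2 - 4 * B) * (z - A)) ^+ 2 - discE' A B
    = 64 * (A ^+ 2 - 4 * B) ^+ 2 * ((z - A) ^+ 2 - 4 * B) by rewrite /discE' /disc; ring.
exact: dvdz_mull.
Qed.

Lemma sqrt_b : legendre (discE' A B) p = 1 -> exists s : F, s ^+ 2 = b.
Proof.
move=> /legendre1_sqr_mod [t /dvdz_vclose1 pt].
have [two0 v2] := two_unit; have [b0 vb] := b_unit; have [c0 vc] := c_unit.
have sixteenE : 16 = 2 ^+ 4 :> F by rewrite -natrX.
have sixteen0 : 16 != 0 :> F by rewrite sixteenE expf_neq0.
have DE : (discE' A B)%:~R = (16 * c) ^+ 2 * b :> F.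
  by rewrite /discE' /disc !(rmorphB, rmorphM, rmorphXn, rmorphN) /c /b /a; ring.
have D0 : (16 * c) ^+ 2 * b != 0 by rewrite !mulf_neq0 ?expf_neq0.
have vD : v ((16 * c) ^+ 2 * b) = 0.
  by rewrite valM ?expf_neq0 ?mulf_neq0 // valX ?mulf_neq0 // valM // vc sixteenE valX // v2 vb.
have t_near : vclose v (v ((16 * c) ^+ 2 * b) + 1) (t%:~R ^+ 2 - (16 * c) ^+ 2 * b).
  by rewrite vD add0r -DE -rmorphXn -rmorphB.
have [w w0 tE] := sqcoset_vclose complete two0 v2 D0 t_near.
exists (t%:~R / (16 * c * w)); rewrite expr_div_n tE.
by field; rewrite w0 c0 sixteen0.
Qed.

Lemma Wpd_legendreN1 : legendre (discE' A B) p = -1 ->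
  forall u : F, Wpd A B d u <-> span1 (discE A B)%:~R u.
Proof.
move=> leg u; rewrite span1E; split.
- case/Wpd_cases => [u1 | uc | [X [X0 vX QX] _]]; first by left.
    by right; apply: sqcoset_trans (sqcoset_sym disc_class) uc.
  by case: (no_unit_root leg (X := X)); first by right; rewrite vX.
- case=> [/Wpd_sqr // | uD].
  by apply: Wpd_c; apply: sqcoset_trans disc_class uD.
Qed.

Lemma Wpd_legendre1 (s : F) : s ^+ 2 = b ->
  forall u : F, Wpd A B d u <-> span2 (discE A B)%:~R (dF * (a + 2 * s)) u.
Proof.
move=> sE u; rewrite span2E.
have [two0 v2] := two_unit; have [b0 vb] := b_unit; have [c0 vc] := c_unit.
set g1 := a + 2 * s; set g2 := a - 2 * s.
have cE : c = g1 * g2 by rewrite /c /g1 /g2 -sE; ring.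
have s_int : vclose v 0 s by apply: vclose0_of_sqr; rewrite sE; apply: vclose0_int.
have g1_int : vclose v 0 g1 by apply/vcloseD/(vclose0_2M v2); first apply: vclose0_int.
have g2_int : vclose v 0 g2 by apply/vcloseB/(vclose0_2M v2); first apply: vclose0_int.
have [vg1 vg2] : v g1 = 0 /\ v g2 = 0 by apply: unit_factors; rewrite // -cE.
have g10 : g1 != 0 by apply: contraNneq c0; rewrite cE => ->; rewrite mul0r.
have g20 : g2 != 0 by apply: contraNneq c0; rewrite cE => ->; rewrite mulr0.
have [g1_root g2_root] : (g1 - a) ^+ 2 - 4 * b = 0 /\ (g2 - a) ^+ 2 - 4 * b = 0.
  by rewrite /g1 /g2 -sE; split; ring.
have g2_class : sqcoset ((discE A B)%:~R * (dF * g1)) (dF * g2).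
  apply: sqcoset_sym; have [w w0 ->] := disc_class.
  by exists (g1 * w); rewrite ?mulf_neq0 // cE; ring.
split.
- case/Wpd_cases => [u1 | uc | [X [X0 vX QX] uX]]; first by constructor 1.
    by constructor 2; apply: sqcoset_trans (sqcoset_sym disc_class) uc.
  have QE : (X - a) ^+ 2 - 4 * b = (X - g1) * (X - g2) by rewrite /g1 /g2 -sE; ring.
  rewrite QE in QX; have X_int : vclose v 0 X by right; rewrite vX.
  case: (root_cases complete two0 v2 g10 vg1 g20 vg2 X_int QX) => Xg.
    by constructor 3; apply: sqcoset_trans (sqcosetMl dF Xg) uX.
  by constructor 4; apply: sqcoset_trans (sqcoset_trans g2_class (sqcosetMl dF Xg)) uX.
- case=> [/Wpd_sqr // | uD | ug1 | ug12].
  + by apply: Wpd_c; apply: sqcoset_trans disc_class uD.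
  + exact: Wpd_2torsion g10 g1_root ug1.
  + by apply: Wpd_2torsion g20 g2_root _; apply: sqcoset_trans (sqcoset_sym g2_class) ug12.
Qed.
End Curve.

End PAdic.

End Valuation.

Theorem lemma3p1 (A B d : int) (p : nat) (F : fieldType) (v : F -> int) :
  discE A B != 0 ->
  (forall x : rat, x ^+ 3 + A%:~R * x ^+ 2 + B%:~R * x = 0 -> x = 0) ->
  squarefree_int d ->
  prime p -> (p%:Z %| d)%Z -> coprime p `|(2 * discE A B)%R|%N ->
  @is_Qp p F v ->
  (legendre (discE' A B) p = -1 ->
     forall u : F, u != 0 -> (Wpd A B d u <-> span1 (discE A B)%:~R u)) /\
  (legendre (discE' A B) p = 1 ->
     (exists s : F, s ^+ 2 = B%:~R) /\
     forall s : F, s ^+ 2 = B%:~R ->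
       forall u : F, u != 0 ->
         (Wpd A B d u <->
          span2 (discE A B)%:~R (d%:~R * (A%:~R + 2 * s)) u)).
Proof.
move=> _ _ d_sqfree p_pr p_dvd_d p_coprime [char0 [valM valD val_rat complete rat_dense]].
split=> leg.
  move=> u _.
  exact: (Wpd_legendreN1 valM valD p_pr char0 val_rat rat_dense complete
           d_sqfree p_dvd_d p_coprime leg u).
split; first exact: (sqrt_b valM valD p_pr char0 val_rat complete p_coprime leg).
move=> s sE u _.
exact: (Wpd_legendre1 valM valD p_pr char0 val_rat complete
         d_sqfree p_dvd_d p_coprime sE u).
Qed.
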